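(* For every integer $m\ge 0$, $$\mathrm{Li}_{2,\{1\}_m}\!\left(\tfrac12\right)=\zeta(m+2)-\sum_{l=0}^{m+1}\frac{(\ln 2)^{m+1-l}}{(m+1-l)!}\mathrm{Li}_{l+1}\!\left(\tfrac12\right),$$ and $$\zeta(\bar 1,\{1\}_m,\bar 1)=(-1)^{m+1}\left\{\zeta(m+2)-\sum_{l=0}^{m+1}\frac{(\ln 2)^{m+1-l}}{(m+1-l)!}\mathrm{Li}_{l+1}\!\left(\tfrac12\right)\right\}.$$
   Context: For nonzero integers $s_1,\dots,s_k$, with $\operatorname{sgn}(s)=1$ if $s>0$ and $-1$ if $s<0$, the multiple zeta value is $\zeta(s_1,\dots,s_k)=\sum_{n_1>n_2>\cdots>n_k\ge 1}\prod_{j=1}^k n_j^{-|s_j|}\operatorname{sgn}(s_j)^{n_j}$. A barred entry $\bar p$ denotes the negative entry $-p$. The notation $\{1\}_m$ means the entry $1$ repeated $m$ times. $\zeta(s)=\sum_{n\ge1}n^{-s}$ is the Riemann zeta function, $\mathrm{Li}_s(x)=\sum_{n\ge1}x^n/n^s$ the polylogarithm, and for positive integers $s_1,\dots,s_r$ and $0\le x<1$, $\mathrm{Li}_{s_1,\dots,s_r}(x)=\sum_{n_1>\cdots>n_r>0}\frac{x^{n_1}}{n_1^{s_1}\cdots n_r^{s_r}}$. *)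

From Stdlib Require Import Reals ZArith List.
From Coquelicot Require Import Coquelicot.
Open Scope R_scope.

Definition mzv_term (s : Z) (n : nat) : R :=
  (if Z.ltb 0 s then 1 else -1) ^ n / (INR n) ^ (Z.abs_nat s).

(* Truncated nested sum:
   nsum [s1;...;sk] N = sum_{N >= n1 > n2 > ... > nk >= 1} prod_j sgn(s_j)^{n_j} / n_j^{|s_j|}
   (nsum [] N = 1). *)
Fixpoint nsum (s : list Z) (N : nat) : R :=
  match s with
  | nil => 1
  | s1 :: rest =>
      (fix go (M : nat) : R :=
         match M with
         | O => 0
         | S k => go k + mzv_term s1 (S k) * nsum rest k
         end) N
  end.

Definition mzv (s : list Z) : R := real (Lim_seq (nsum s)).

Definition zeta (k : nat) : R := mzv (Z.of_nat k :: nil).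

(* Truncated multiple polylogarithm, positive integer indices:
   li_partial [s1;...;sr] x N = sum_{N >= n1 > ... > nr > 0} x^{n1} / (n1^{s1} ... nr^{sr}) *)
Definition li_partial (s : list nat) (x : R) (N : nat) : R :=
  match s with
  | nil => 1
  | s1 :: rest =>
      (fix go (M : nat) : R :=
         match M with
         | O => 0
         | S k => go k + x ^ (S k) / (INR (S k)) ^ s1 * nsum (map Z.of_nat rest) k
         end) N
  end.

Definition mpolylog (s : list nat) (x : R) : R := real (Lim_seq (li_partial s x)).
Definition polylog (k : nat) (x : R) : R := mpolylog (k :: nil) x.

From Stdlib Require Import Reals ZArith List Lra Lia.
From Coquelicot Require Import Coquelicot.
Open Scope R_scope.

(* Write L(x) = -ln(1 - x), so that Li_{{1}_k}(x) = L(x)^k / k!.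

   First identity: by the differential relations of multiple polylogarithms,
   Li_{2,{1}_m}(x) + sum_{l=0}^{m+1} Li_{l+1}(1 - x) L(x)^(m+1-l) / (m+1-l)!
   has a telescoping, hence zero, derivative on (0,1).  Its limit at 0+ is zeta(m+2)
   (Abel's theorem for Li_{m+2}(1 - x); the term L(x)^(m+1) ln x tends to 0), and its
   value at 1/2 gives the formula.

   Second identity: by induction on k, comparing derivatives and values at u = 1/2,
   Li_{{1}_k,bar1}(1 - 2u) = (-1)^k (Li_{k+1}(u) - P_k(u)) on (0,1), where
   P_k(u) = sum_{l=0}^k Li_{l+1}(1/2) ln(2u)^(k-l) / (k-l)!.  The power series of
   zeta(bar1, {1}_m, bar1) evaluated at y is Li_{{1}_{m+1},bar1}(-y); letting y -> 1-
   (u = (1 + y)/2 -> 1) Abel's theorem yields the value.  The series converges by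
   Dirichlet's test: the truncated sums of k signed indices grow at most like
   2^k sqrt N, so the coefficients have bounded variation. *)

(** * Complements of real analysis *)

Section FilterlimR.
Context {T : Type} {F : (T -> Prop) -> Prop} {FF : Filter F}.

Lemma filterlim_Rmult (f g : T -> R) a b :
  filterlim f F (locally a) -> filterlim g F (locally b) ->
  filterlim (fun x => f x * g x) F (locally (a * b)).
Proof.
  intros Hf Hg. eapply filterlim_comp_2; eauto.
  apply (filterlim_mult (K := R_AbsRing) a b).
Qed.

Lemma filterlim_Rplus (f g : T -> R) a b :
  filterlim f F (locally a) -> filterlim g F (locally b) ->
  filterlim (fun x => f x + g x) F (locally (a + b)).
Proof.
  intros Hf Hg. eapply filterlim_comp_2; eauto.
  apply (filterlim_plus (K := R_AbsRing) (V := R_NormedModule) a b).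
Qed.

Lemma filterlim_Rminus (f g : T -> R) a b :
  filterlim f F (locally a) -> filterlim g F (locally b) ->
  filterlim (fun x => f x - g x) F (locally (a - b)).
Proof.
  intros Hf Hg. apply filterlim_Rplus; [exact Hf|].
  eapply filterlim_comp; [exact Hg|apply (filterlim_opp (K := R_AbsRing) (V := R_NormedModule))].
Qed.

Lemma filterlim_Rpow (f : T -> R) a k :
  filterlim f F (locally a) -> filterlim (fun x => f x ^ k) F (locally (a ^ k)).
Proof.
  intros Hf. induction k as [|k IH]; simpl.
  - apply filterlim_const.
  - apply filterlim_Rmult; auto.
Qed.

Lemma filterlim_sum_f_R0 (f : nat -> T -> R) (l : nat -> R) n :
  (forall j, (j <= n)%nat -> filterlim (f j) F (locally (l j))) ->
  filterlim (fun x => sum_f_R0 (fun j => f j x) n) F (locally (sum_f_R0 l n)).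
Proof.
  induction n as [|n IH]; intros H; simpl.
  - apply H; lia.
  - apply filterlim_Rplus; [apply IH; intros|]; apply H; lia.
Qed.

End FilterlimR.

Lemma filterlim_at_right_of_continuous (f : R -> R) x :
  continuity_pt f x -> filterlim f (at_right x) (locally (f x)).
Proof.
  intros Hf. eapply filterlim_filter_le_1; [apply filter_le_within|].
  now apply continuity_pt_filterlim.
Qed.

Lemma filterlim_at_left_of_continuous (f : R -> R) x :
  continuity_pt f x -> filterlim f (at_left x) (locally (f x)).
Proof.
  intros Hf. eapply filterlim_filter_le_1; [apply filter_le_within|].
  now apply continuity_pt_filterlim.
Qed.

Lemma ball_R_iff (x e y : R) : ball x e y <-> x - e < y < x + e.
Proof.
  unfold ball; simpl; unfold AbsRing_ball, abs, minus, plus, opp; simpl.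
  split; intros H; [apply Rabs_def2 in H|apply Rabs_def1]; lra.
Qed.

Lemma at_right_0_interval : at_right 0 (fun x => 0 < x < 1).
Proof.
  exists (mkposreal 1 Rlt_0_1). intros y Hy Hpos.
  apply ball_R_iff in Hy. simpl in Hy. lra.
Qed.

Lemma at_left_1_interval : at_left 1 (fun x => 0 < x < 1).
Proof.
  exists (mkposreal 1 Rlt_0_1). intros y Hy Hlt.
  apply ball_R_iff in Hy. simpl in Hy. lra.
Qed.

Lemma derive_zero_const (f : R -> R) a b :
  (forall x, a < x < b -> is_derive f x 0) ->
  forall x y, a < x < b -> a < y < b -> f x = f y.
Proof.
  intros Hd x y Hx Hy.
  assert (Hin : forall z, Rmin x y <= z <= Rmax x y -> a < z < b).
  { intros z Hz. split.
    - apply Rlt_le_trans with (Rmin x y); [apply Rmin_glb_lt|]; lra.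
    - apply Rle_lt_trans with (Rmax x y); [|apply Rmax_lub_lt]; lra. }
  destruct (MVT_gen f x y (fun _ => 0)) as [c [_ Hc]].
  - intros z Hz. apply Hd, Hin. lra.
  - intros z Hz. apply continuity_pt_filterlim.
    apply (ex_derive_continuous (K := R_AbsRing) (V := R_NormedModule) f z).
    eexists. now apply Hd, Hin.
  - lra.
Qed.

Lemma same_derive_eq (f g df : R -> R) a b c :
  (forall x, a < x < b -> is_derive f x (df x)) ->
  (forall x, a < x < b -> is_derive g x (df x)) ->
  a < c < b -> f c = g c -> forall x, a < x < b -> f x = g x.
Proof.
  intros Hf Hg Hc Hfg x Hx.
  assert (H : forall y, a < y < b -> is_derive (fun t => f t - g t) y 0).
  { intros y Hy. replace 0 with (df y - df y) by ring.
    apply (is_derive_minus f g); auto. }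
  pose proof (derive_zero_const _ a b H x c Hx Hc). lra.
Qed.

Lemma is_derive_Rmult (f g : R -> R) x df dg :
  is_derive f x df -> is_derive g x dg ->
  is_derive (fun t => f t * g t) x (df * g x + f x * dg).
Proof. intros Hf Hg. apply (is_derive_mult f g); auto. intros; apply Rmult_comm. Qed.

Lemma CV_radius_ge_1_of_ex_series (a : nat -> R) :
  ex_series a -> Rbar_le 1 (CV_radius a).
Proof.
  intros Ha. apply Rbar_not_lt_le. intros Hlt.
  apply (CV_disk_outside a 1); [now rewrite Rabs_R1|].
  eapply is_lim_seq_ext; [|apply ex_series_lim_0, Ha].
  intros n. simpl. now rewrite pow1, Rmult_1_r.
Qed.

(* Unlike Coquelicot's [Abel], no assumption on the radius of convergence. *)
Lemma Abel_at_left_1 (a : nat -> R) :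
  ex_series a -> filterlim (PSeries a) (at_left 1) (locally (Series a)).
Proof.
  intros Ha.
  assert (HS : PSeries a 1 = Series a).
  { apply Series_ext. intros n. now rewrite pow1, Rmult_1_r. }
  rewrite <- HS.
  pose proof (CV_radius_ge_1_of_ex_series a Ha) as Hr.
  destruct (Rbar_le_lt_or_eq_dec _ _ Hr) as [Hlt|Heq].
  - apply filterlim_at_left_of_continuous, PSeries_continuity.
    now rewrite Rabs_R1.
  - pose proof (Abel a) as HA. rewrite <- Heq in HA. apply HA.
    + simpl. lra.
    + easy.
    + eapply ex_series_ext; [|exact Ha]. intros n.
      rewrite pow_n_pow, pow1. unfold scal; simpl; unfold mult; simpl. ring.
Qed.

Lemma ex_series_Dirichlet (b c : nat -> R) M :
  (forall N, Rabs (sum_n b N) <= M) -> is_lim_seq c 0 ->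
  ex_series (fun n => Rabs (c (S n) - c n)) -> ex_series (fun n => b n * c n).
Proof.
  intros HB Hc Hvar. set (B := sum_n b).
  assert (Hparts : forall N, @eq R (sum_n (fun n => b n * c n) N)
                             (sum_n (fun n => B n * (c n - c (S n))) N + B N * c (S N))).
  { unfold B. induction N as [|N IH].
    - rewrite !sum_O. ring.
    - rewrite !sum_Sn, IH. unfold plus; simpl. ring. }
  assert (Habs : ex_series (fun n => B n * (c n - c (S n)))).
  { apply (ex_series_le (K := R_AbsRing) (V := R_CompleteNormedModule))
      with (fun n => M * Rabs (c (S n) - c n)).
    - intros n. unfold norm; simpl; unfold abs; simpl.
      rewrite Rabs_mult, Rabs_minus_sym.
      apply Rmult_le_compat_r; [apply Rabs_pos|apply HB].
    - now apply (ex_series_scal_l (K := R_AbsRing) (V := R_NormedModule)). }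
  assert (Hrem : is_lim_seq (fun N => B N * c (S N)) 0).
  { apply is_lim_seq_abs_0.
    apply is_lim_seq_le_le with (fun _ => 0) (fun N => M * Rabs (c (S N))).
    - intros N. rewrite Rabs_mult. split; [apply Rmult_le_pos; apply Rabs_pos|].
      apply Rmult_le_compat_r; [apply Rabs_pos|apply HB].
    - apply is_lim_seq_const.
    - replace (Finite 0) with (Rbar_mult M 0) by (simpl; f_equal; ring).
      apply is_lim_seq_scal_l, (is_lim_seq_abs_0 (fun N => c (S N))).
      now apply (is_lim_seq_incr_1 c). }
  exists (Series (fun n => B n * (c n - c (S n))) + 0).
  change (is_lim_seq (sum_n (fun n => b n * c n))
            (Finite (Series (fun n => B n * (c n - c (S n))) + 0))).
  apply (is_lim_seq_ext (fun N => sum_n (fun n => B n * (c n - c (S n))) N + B N * c (S N)));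
    [intros N; symmetry; apply Hparts|].
  apply is_lim_seq_plus'; [apply Series_correct, Habs|exact Hrem].
Qed.

Lemma is_series_telescoping (u : nat -> R) (l : R) :
  is_lim_seq u l -> is_series (fun n => u n - u (S n)) (u O - l).
Proof.
  intros Hu.
  assert (Hsum : forall N, @eq R (sum_n (fun n => u n - u (S n)) N) (u O - u (S N))).
  { induction N as [|N IH]; [now rewrite sum_O|].
    rewrite sum_Sn, IH. unfold plus; simpl. ring. }
  change (is_lim_seq (sum_n (fun n => u n - u (S n))) (Finite (u O - l))).
  apply (is_lim_seq_ext (fun N => u O - u (S N))); [intros N; symmetry; apply Hsum|].
  apply is_lim_seq_minus'; [apply is_lim_seq_const|].
  apply (is_lim_seq_incr_1 u), Hu.
Qed.

Lemma is_lim_seq_inv_sqrt_S : is_lim_seq (fun n => / sqrt (INR (S n))) 0.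
Proof.
  assert (Hinv : is_lim_seq (fun n => / INR (S n)) 0).
  { replace (Finite 0) with (Rbar_inv p_infty) by reflexivity.
    apply is_lim_seq_inv; [|discriminate].
    apply (is_lim_seq_incr_1 INR), is_lim_seq_INR. }
  eapply is_lim_seq_ext; [intros n; apply sqrt_inv|].
  rewrite <- sqrt_0.
  apply (filterlim_comp _ _ _ (fun n => / INR (S n)) sqrt eventually (locally 0)); [exact Hinv|].
  apply continuity_pt_filterlim, continuity_pt_sqrt. lra.
Qed.

(* With a := sqrt (n+1) and b := sqrt (n+2): 1 / a^3 <= 4 (1/a - 1/b). *)
Lemma ex_series_inv_pow_3_2 :
  ex_series (fun n => / (INR (S n) * sqrt (INR (S n)))).
Proof.
  apply (ex_series_le (K := R_AbsRing) (V := R_CompleteNormedModule))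
    with (fun n => 4 * (/ sqrt (INR (S n)) - / sqrt (INR (S (S n))))).
  - intros n. pose proof (pos_INR n). rewrite !S_INR.
    unfold norm; simpl; unfold abs; simpl.
    assert (Ha : 1 <= sqrt (INR n + 1)) by (rewrite <- sqrt_1 at 1; apply sqrt_le_1_alt; lra).
    assert (Hb : sqrt (INR n + 1) < sqrt (INR n + 1 + 1)) by (apply sqrt_lt_1_alt; lra).
    assert (Ha2 : sqrt (INR n + 1) * sqrt (INR n + 1) = INR n + 1) by (apply sqrt_sqrt; lra).
    assert (Hb2 : sqrt (INR n + 1 + 1) * sqrt (INR n + 1 + 1) = INR n + 1 + 1)
      by (apply sqrt_sqrt; lra).
    set (a := sqrt (INR n + 1)) in *. set (b := sqrt (INR n + 1 + 1)) in *.
    rewrite <- Ha2.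
    rewrite Rabs_pos_eq by (left; apply Rinv_0_lt_compat; nra).
    assert (Hdiff : / a - / b = / (a * b * (a + b))).
    { rewrite <- (Rmult_1_l (/ (a * b * (a + b)))).
      replace 1 with (b * b - a * a) by lra. field. lra. }
    rewrite Hdiff.
    replace (4 * / (a * b * (a + b))) with (/ (a * b * (a + b) / 4)) by (field; nra).
    apply Rinv_le_contravar; [nra|].
    assert (b <= a + 1) by nra.
    nra.
  - apply (ex_series_scal_l (K := R_AbsRing) (V := R_NormedModule) 4
             (fun n => / sqrt (INR (S n)) - / sqrt (INR (S (S n))))).
    eexists. apply (is_series_telescoping (fun n => / sqrt (INR (S n)))), is_lim_seq_inv_sqrt_S.
Qed.

Lemma x_ln_at_right_0 : filterlim (fun x => x * ln x) (at_right 0) (locally 0).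
Proof.
  assert (H : filterlim (fun x => - (ln (/ x) / (/ x))) (at_right 0) (locally (- 0))).
  { apply (filterlim_comp _ _ _ (fun x => ln (/ x) / (/ x)) Ropp _ (locally 0));
      [|apply (filterlim_opp (K := R_AbsRing) (V := R_NormedModule))].
    apply (filterlim_comp _ _ _ Rinv (fun y => ln y / y) _ (Rbar_locally p_infty));
      [apply filterlim_Rinv_0_right|apply is_lim_div_ln_p]. }
  rewrite Ropp_0 in H. revert H. apply filterlim_ext_loc.
  eapply filter_imp; [|apply at_right_0_interval]. intros x Hx.
  rewrite ln_Rinv by lra. field. lra.
Qed.

Lemma PSeries_mul_ln_at_right_0 (a : nat -> R) :
  a O = 0 -> Rbar_lt 0 (CV_radius a) ->
  filterlim (fun x => PSeries a x * ln x) (at_right 0) (locally 0).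
Proof.
  intros Ha0 Hr.
  replace (locally 0) with (locally (PSeries (PS_decr_1 a) 0 * 0)) by (f_equal; ring).
  apply (filterlim_ext (fun x => PSeries (PS_decr_1 a) x * (x * ln x))).
  { intros x. rewrite (PSeries_decr_1_aux a x Ha0). ring. }
  apply filterlim_Rmult; [|apply x_ln_at_right_0].
  apply filterlim_at_right_of_continuous, PSeries_continuity.
  rewrite CV_radius_decr_1, Rabs_R0. exact Hr.
Qed.

Definition dpow (j : nat) (y : R) : R := y ^ j / INR (fact j).

Lemma dpow_0 y : dpow 0 y = 1.
Proof. unfold dpow. simpl. field. Qed.

Lemma dpow_S_at_0 j : dpow (S j) 0 = 0.
Proof. unfold dpow. rewrite pow_i by lia. unfold Rdiv. ring. Qed.

Lemma dpow_S j y : dpow (S j) y = dpow j y * y / INR (S j).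
Proof.
  unfold dpow. rewrite fact_simpl, mult_INR. simpl pow.
  pose proof (INR_fact_neq_0 j). pose proof (lt_0_INR (S j) (Nat.lt_0_succ j)).
  field. lra.
Qed.

Lemma is_derive_dpow j y : is_derive (dpow (S j)) y (dpow j y).
Proof.
  unfold dpow. auto_derive; [easy|].
  change (match j with 0%nat => 1 | S _ => INR j + 1 end) with (INR (S j)).
  change (fact j + j * fact j)%nat with (fact (S j)).
  rewrite fact_simpl, mult_INR.
  pose proof (INR_fact_neq_0 j). pose proof (lt_0_INR (S j) (Nat.lt_0_succ j)).
  field. lra.
Qed.

Lemma filterlim_dpow {T} {F : (T -> Prop) -> Prop} {FF : Filter F} (g : T -> R) y j :
  filterlim g F (locally y) -> filterlim (fun x => dpow j (g x)) F (locally (dpow j y)).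
Proof.
  intros Hg. apply filterlim_Rmult; [now apply filterlim_Rpow|apply filterlim_const].
Qed.

Lemma is_derive_dpow_neg_ln_1m j x : x < 1 ->
  is_derive (fun y => dpow (S j) (- ln (1 - y))) x (dpow j (- ln (1 - x)) / (1 - x)).
Proof.
  intros Hx.
  replace (dpow j (- ln (1 - x)) / (1 - x)) with (/ (1 - x) * dpow j (- ln (1 - x)))
    by (field; lra).
  apply (is_derive_comp (dpow (S j)) (fun y => - ln (1 - y))); [apply is_derive_dpow|].
  auto_derive; [lra|field; lra].
Qed.

Definition dpow_sum (n : nat) (y : R) (f : nat -> R) : R :=
  sum_f_R0 (fun l => f l * dpow (n - l) y) n.

Lemma dpow_sum_ext n y (f g : nat -> R) :
  (forall l, (l <= n)%nat -> f l = g l) -> dpow_sum n y f = dpow_sum n y g.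
Proof. intros H. apply sum_eq. intros l Hl. now rewrite H. Qed.

Lemma dpow_sum_succ_l n y f :
  dpow_sum (S n) y f = f O * dpow (S n) y + dpow_sum n y (fun l => f (S l)).
Proof.
  unfold dpow_sum. rewrite decomp_sum by lia. reflexivity.
Qed.

Lemma dpow_sum_at_0 n f : dpow_sum n 0 f = f n.
Proof.
  unfold dpow_sum. rewrite <- (Rplus_0_l (f n)).
  destruct n as [|n]; [simpl; rewrite dpow_0; ring|].
  rewrite tech5, Nat.sub_diag, dpow_0, Rmult_1_r. f_equal.
  rewrite sum_eq_R0; [easy|]. intros l Hl.
  replace (S n - l)%nat with (S (n - l)) by lia. rewrite dpow_S_at_0. ring.
Qed.

Lemma is_derive_dpow_sum n y f :
  is_derive (fun y => dpow_sum (S n) y f) y (dpow_sum n y f).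
Proof.
  unfold dpow_sum. eapply is_derive_ext; [intros t; symmetry; apply tech5|].
  rewrite <- (Rplus_0_r (sum_f_R0 _ n)).
  apply (is_derive_plus (K := R_AbsRing) (V := R_NormedModule)).
  - apply (is_derive_ext (fun t => sum_n (fun l => f l * dpow (S n - l) t) n));
      [intros t; apply sum_n_Reals|].
    rewrite <- sum_n_Reals.
    apply (is_derive_sum_n (fun l t => f l * dpow (S n - l) t)). intros l Hl.
    replace (S n - l)%nat with (S (n - l)) by lia.
    apply is_derive_scal, is_derive_dpow.
  - apply (is_derive_ext (fun _ => f (S n)));
      [|exact (is_derive_const (K := R_AbsRing) (V := R_NormedModule) (f (S n)) y)].
    intros t. cbv beta. rewrite Nat.sub_diag, dpow_0. symmetry. apply Rmult_1_r.
Qed.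

Lemma filterlim_dpow_sum {T} {F : (T -> Prop) -> Prop} {FF : Filter F}
    n (g : T -> R) (f : T -> nat -> R) y (c : nat -> R) :
  filterlim g F (locally y) ->
  (forall l, (l <= n)%nat -> filterlim (fun x => f x l) F (locally (c l))) ->
  filterlim (fun x => dpow_sum n (g x) (f x)) F (locally (dpow_sum n y c)).
Proof.
  intros Hg Hf. apply (filterlim_sum_f_R0 (fun l x => f x l * dpow (n - l) (g x))).
  intros l Hl. apply filterlim_Rmult; [now apply Hf|now apply filterlim_dpow].
Qed.

Lemma x_mul_PSeries_PS_derive (a b : nat -> R) x :
  b O = 0 -> (forall n, INR (S n) * a (S n) = b (S n)) ->
  x * PSeries (PS_derive a) x = PSeries b x.
Proof.
  intros Hb0 Hab. rewrite <- PSeries_incr_1. apply PSeries_ext.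
  intros [|n]; [now symmetry|]. apply Hab.
Qed.

Lemma is_derive_PSeries_div_x (a b : nat -> R) x :
  Rbar_lt (Rabs x) (CV_radius a) -> x <> 0 ->
  b O = 0 -> (forall n, INR (S n) * a (S n) = b (S n)) ->
  is_derive (PSeries a) x (PSeries b x / x).
Proof.
  intros Hx Hx0 Hb0 Hab.
  rewrite <- (x_mul_PSeries_PS_derive a b x Hb0 Hab).
  replace (x * PSeries (PS_derive a) x / x) with (PSeries (PS_derive a) x) by (field; exact Hx0).
  now apply is_derive_PSeries.
Qed.

Lemma sqrt_step x : 0 <= x -> 2 * sqrt x + / sqrt (x + 1) <= 2 * sqrt (x + 1).
Proof.
  intros Hx.
  assert (Ha : 0 <= sqrt x) by apply sqrt_pos.
  assert (Hb : 0 < sqrt (x + 1)) by (apply sqrt_lt_R0; lra).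
  assert (Ha2 : sqrt x * sqrt x = x) by (apply sqrt_sqrt; lra).
  assert (Hb2 : sqrt (x + 1) * sqrt (x + 1) = x + 1) by (apply sqrt_sqrt; lra).
  set (a := sqrt x) in *. set (b := sqrt (x + 1)) in *.
  apply Rmult_le_reg_r with b; [exact Hb|].
  rewrite Rmult_plus_distr_r, Rinv_l by lra. nra.
Qed.

(** * Multiple polylogarithms with signed indices *)

Definition mLi_coef (s : list Z) (n : nat) : R :=
  match s with
  | nil => if Nat.eqb n 0 then 1 else 0
  | s1 :: r => match n with O => 0 | S k => mzv_term s1 n * nsum r k end
  end.

Definition mLi (s : list Z) (x : R) : R := PSeries (mLi_coef s) x.

Definition nonzero_indices (s : list Z) : Prop := List.Forall (fun z => z <> 0%Z) s.

Lemma nonzero_indices_ones k : nonzero_indices (repeat 1%Z k).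
Proof. induction k; constructor; [lia|assumption]. Qed.

Lemma nsum_cons_S s1 r N :
  nsum (s1 :: r) (S N) = nsum (s1 :: r) N + mzv_term s1 (S N) * nsum r N.
Proof. reflexivity. Qed.

Lemma nsum_eq_sum_n s N : nsum s N = sum_n (mLi_coef s) N.
Proof.
  induction N as [|N IH]; [now destruct s; rewrite sum_O|].
  rewrite sum_Sn, <- IH. destruct s as [|s1 r]; [simpl; unfold plus; simpl; ring|].
  apply nsum_cons_S.
Qed.

Lemma mzv_term_pos s n : (0 < s)%Z -> mzv_term s n = / INR n ^ Z.to_nat s.
Proof.
  intros Hs. unfold mzv_term.
  replace (0 <? s)%Z with true by (symmetry; apply Z.ltb_lt; lia).
  rewrite pow1. replace (Z.abs_nat s) with (Z.to_nat s) by lia. apply Rmult_1_l.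
Qed.

Lemma mzv_term_1 n : mzv_term 1 n = / INR n.
Proof. rewrite mzv_term_pos by lia. apply f_equal, pow_1. Qed.

Lemma mzv_term_opp s n : (0 < s)%Z -> mzv_term (- s) n = (-1) ^ n * mzv_term s n.
Proof.
  intros Hs. unfold mzv_term.
  replace (0 <? - s)%Z with false by (symmetry; apply Z.ltb_ge; lia).
  replace (0 <? s)%Z with true by (symmetry; apply Z.ltb_lt; lia).
  replace (Z.abs_nat (- s)) with (Z.abs_nat s) by lia. rewrite pow1. unfold Rdiv. ring.
Qed.

Lemma Rabs_mzv_term_le s n : s <> 0%Z -> (1 <= n)%nat -> Rabs (mzv_term s n) <= / INR n.
Proof.
  intros Hs Hn. assert (HnR : 1 <= INR n) by (apply (le_INR 1); lia).
  unfold mzv_term. rewrite Rabs_div by (apply pow_nonzero; lra).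
  rewrite <- RPow_abs, (Rabs_pos_eq (INR n ^ _)) by (apply pow_le; lra).
  replace (Rabs (if (0 <? s)%Z then 1 else -1)) with 1
    by (destruct (0 <? s)%Z; [rewrite Rabs_R1|rewrite Rabs_m1]; reflexivity).
  rewrite pow1. unfold Rdiv. rewrite Rmult_1_l. apply Rinv_le_contravar; [lra|].
  destruct (Z.abs_nat s) as [|k] eqn:E; [lia|]. rewrite <- tech_pow_Rmult.
  rewrite <- (Rmult_1_r (INR n)) at 1. apply Rmult_le_compat_l; [lra|].
  now apply pow_R1_Rle.
Qed.

Lemma Rabs_nsum_le s N :
  nonzero_indices s -> Rabs (nsum s N) <= 2 ^ length s * sqrt (INR (S N)).
Proof.
  revert N. induction s as [|s1 r IH]; intros N Hs.
  - change (Rabs 1 <= 1 * sqrt (INR (S N))).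
    rewrite Rabs_R1, Rmult_1_l, <- sqrt_1 at 1.
    apply sqrt_le_1_alt, (le_INR 1). lia.
  - inversion Hs as [|? ? Hs1 Hr]; subst.
    (* The induction on N only closes with the sharper bound sqrt N, thanks to sqrt_step. *)
    assert (Hstrong : forall M, Rabs (nsum (s1 :: r) M) <= 2 ^ S (length r) * sqrt (INR M)).
    { clear N. induction M as [|N IHN].
      { change (Rabs 0 <= 2 ^ S (length r) * sqrt 0). rewrite Rabs_R0, sqrt_0. lra. }
      rewrite nsum_cons_S. eapply Rle_trans; [apply Rabs_triang|].
      rewrite Rabs_mult.
      assert (Hterm : Rabs (mzv_term s1 (S N)) * Rabs (nsum r N)
                      <= 2 ^ length r * / sqrt (INR (S N))).
      { pose proof (lt_0_INR (S N) (Nat.lt_0_succ N)) as HN.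
        assert (Hsq : 0 < sqrt (INR (S N))) by now apply sqrt_lt_R0.
        eapply Rle_trans.
        { apply Rmult_le_compat; [apply Rabs_pos|apply Rabs_pos| |apply IH, Hr].
          apply Rabs_mzv_term_le; [exact Hs1|lia]. }
        rewrite <- (sqrt_sqrt (INR (S N))) at 1 by lra.
        right. field. lra. }
      pose proof (sqrt_step (INR N) (pos_INR N)) as Hstep. rewrite <- S_INR in Hstep.
      apply Rmult_le_compat_l with (r := 2 ^ length r) in Hstep; [|apply pow_le; lra].
      simpl pow in IHN |- *. lra. }
    eapply Rle_trans; [apply Hstrong|].
    apply Rmult_le_compat_l; [apply pow_le; lra|].
    apply sqrt_le_1_alt, le_INR. lia.
Qed.

Lemma Rabs_mLi_coef_S_le s n :
  nonzero_indices s -> Rabs (mLi_coef s (S n)) <= 2 ^ length s / sqrt (INR (S n)).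
Proof.
  intros Hs. pose proof (lt_0_INR (S n) (Nat.lt_0_succ n)) as Hn.
  assert (Hsq : 0 < sqrt (INR (S n))) by now apply sqrt_lt_R0.
  destruct s as [|s1 r].
  - simpl. rewrite Rabs_R0. apply Rmult_le_pos; [lra|]. left. now apply Rinv_0_lt_compat.
  - inversion Hs as [|? ? Hs1 Hr]; subst. simpl mLi_coef. rewrite Rabs_mult.
    eapply Rle_trans.
    { apply Rmult_le_compat; [apply Rabs_pos|apply Rabs_pos| |apply Rabs_nsum_le, Hr].
      apply Rabs_mzv_term_le; [exact Hs1|lia]. }
    rewrite <- (sqrt_sqrt (INR (S n))) at 1 by lra. simpl length. simpl pow.
    apply Rmult_le_reg_l with (sqrt (INR (S n))); [exact Hsq|].
    field_simplify; [|lra|lra]. pose proof (pow_le 2 (length r)). lra.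
Qed.

Lemma CV_radius_mLi_coef s : nonzero_indices s -> Rbar_le 1 (CV_radius (mLi_coef s)).
Proof.
  intros Hs. apply CV_radius_bounded. exists (2 ^ length s). intros [|n].
  - rewrite pow_O, Rmult_1_r. pose proof (pow_le 2 (length s) ltac:(lra)).
    destruct s; simpl in *; rewrite ?Rabs_R1, ?Rabs_R0; lra.
  - rewrite pow1, Rmult_1_r. eapply Rle_trans; [now apply Rabs_mLi_coef_S_le|].
    assert (Hsq : 1 <= sqrt (INR (S n))).
    { rewrite <- sqrt_1 at 1. apply sqrt_le_1_alt, (le_INR 1). lia. }
    pose proof (pow_le 2 (length s) ltac:(lra)).
    apply Rmult_le_reg_r with (sqrt (INR (S n))); [lra|].
    unfold Rdiv. rewrite Rmult_assoc, Rinv_l by lra. nra.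
Qed.

Lemma mLi_coef_inside s x :
  nonzero_indices s -> Rabs x < 1 -> Rbar_lt (Rabs x) (CV_radius (mLi_coef s)).
Proof.
  intros Hs Hx. apply Rbar_lt_le_trans with 1; [exact Hx|]. now apply CV_radius_mLi_coef.
Qed.

Lemma li_partial_cons_S s1 r x N :
  li_partial (s1 :: r) x (S N)
  = li_partial (s1 :: r) x N + x ^ S N / INR (S N) ^ s1 * nsum (map Z.of_nat r) N.
Proof. reflexivity. Qed.

Lemma li_partial_eq_sum_n s1 r x N : (1 <= s1)%nat ->
  li_partial (s1 :: r) x N
  = sum_n (fun n => mLi_coef (Z.of_nat s1 :: map Z.of_nat r) n * x ^ n) N.
Proof.
  intros Hs1. induction N as [|N IH]; [rewrite sum_O; simpl; ring|].
  rewrite sum_Sn, <- IH, li_partial_cons_S. cbn [mLi_coef].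
  rewrite mzv_term_pos, Nat2Z.id by lia. unfold plus; cbn -[INR pow]. unfold Rdiv. ring.
Qed.

Lemma is_lim_seq_li_partial s1 r x : (1 <= s1)%nat ->
  nonzero_indices (Z.of_nat s1 :: map Z.of_nat r) -> Rabs x < 1 ->
  is_lim_seq (li_partial (s1 :: r) x) (mLi (Z.of_nat s1 :: map Z.of_nat r) x).
Proof.
  intros Hs1 Hs Hx.
  pose proof (PSeries_correct _ _ (CV_radius_inside _ _ (mLi_coef_inside _ _ Hs Hx))) as H.
  eapply is_lim_seq_ext; [|exact H]. intros N.
  rewrite li_partial_eq_sum_n by exact Hs1. apply sum_n_ext. intros n.
  rewrite pow_n_pow. unfold scal; simpl; unfold mult; simpl. ring.
Qed.

Lemma mLi_nil x : Rabs x < 1 -> mLi nil x = 1.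
Proof.
  intros Hx. unfold mLi.
  rewrite PSeries_decr_1 by (apply CV_radius_inside, mLi_coef_inside; [constructor|exact Hx]).
  rewrite (PSeries_ext _ (fun _ => 0)), PSeries_const_0; [simpl; ring|easy].
Qed.

Lemma mLi_cons_at_0 s1 r : mLi (s1 :: r) 0 = 0.
Proof. apply PSeries_0. Qed.

Lemma is_derive_mLi_one_head r x : nonzero_indices r -> Rabs x < 1 ->
  is_derive (mLi (1%Z :: r)) x (mLi r x / (1 - x)).
Proof.
  intros Hr Hx. assert (Hx1 : x <> 1) by (intros ->; rewrite Rabs_R1 in Hx; lra).
  assert (Hs : nonzero_indices (1%Z :: r)) by (constructor; [lia|exact Hr]).
  assert (Hcoef : forall n, PS_derive (mLi_coef (1%Z :: r)) n = sum_n (mLi_coef r) n).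
  { intros n. unfold PS_derive. cbn [mLi_coef]. rewrite mzv_term_1, nsum_eq_sum_n.
    field. apply not_0_INR. lia. }
  set (P := sum_n (mLi_coef r)).
  assert (HP : ex_pseries P x).
  { eapply ex_pseries_ext; [exact Hcoef|].
    apply ex_pseries_derive, mLi_coef_inside; assumption. }
  (* Multiplying by 1 - x turns the series of partial sums P back into mLi r. *)
  assert (Hmul : (1 - x) * PSeries P x = mLi r x).
  { replace ((1 - x) * PSeries P x) with (PSeries P x - x * PSeries P x) by ring.
    rewrite <- PSeries_incr_1, <- PSeries_minus by (try apply ex_pseries_incr_1; exact HP).
    apply PSeries_ext. intros [|n]; unfold PS_minus, PS_incr_1, P.
    - rewrite sum_O. unfold plus, opp, zero; simpl. ring.
    - rewrite sum_Sn. unfold plus, opp; simpl. ring. }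
  rewrite <- Hmul. replace ((1 - x) * PSeries P x / (1 - x)) with (PSeries P x) by (field; lra).
  rewrite <- (PSeries_ext _ P x Hcoef). now apply is_derive_PSeries, mLi_coef_inside.
Qed.

Lemma is_derive_mLi_succ_head k r x : (1 <= k)%nat -> x <> 0 -> Rabs x < 1 ->
  nonzero_indices (Z.of_nat (S k) :: r) ->
  is_derive (mLi (Z.of_nat (S k) :: r)) x (mLi (Z.of_nat k :: r) x / x).
Proof.
  intros Hk Hx0 Hx Hs. apply is_derive_PSeries_div_x; [now apply mLi_coef_inside|exact Hx0|easy|].
  intros n. cbn [mLi_coef]. rewrite !mzv_term_pos, !Nat2Z.id by lia.
  rewrite <- tech_pow_Rmult. field.
  split; [apply pow_nonzero|]; apply not_0_INR; lia.
Qed.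

Lemma mLi_coef_opp_head s1 r n : (0 < s1)%Z ->
  mLi_coef ((- s1)%Z :: r) n = (-1) ^ n * mLi_coef (s1 :: r) n.
Proof.
  intros Hs1. destruct n as [|n]; [simpl; ring|]. cbn [mLi_coef].
  rewrite mzv_term_opp by exact Hs1. ring.
Qed.

Lemma mLi_opp_head s1 r x : (0 < s1)%Z -> mLi ((- s1)%Z :: r) x = mLi (s1 :: r) (- x).
Proof.
  intros Hs1. apply Series_ext. intros n. rewrite mLi_coef_opp_head by exact Hs1.
  replace (- x) with (-1 * x) by ring. rewrite Rpow_mult_distr. ring.
Qed.

Lemma mLi_ones k x : -1 < x < 1 -> mLi (repeat 1%Z k) x = dpow k (- ln (1 - x)).
Proof.
  revert x. induction k as [|k IH]; intros x Hx.
  - rewrite dpow_0. apply mLi_nil, Rabs_def1; lra.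
  - apply (same_derive_eq _ (fun y => dpow (S k) (- ln (1 - y)))
             (fun y => dpow k (- ln (1 - y)) / (1 - y)) (-1) 1 0);
      [| |lra| |exact Hx].
    + intros y Hy. rewrite <- IH by exact Hy.
      apply is_derive_mLi_one_head; [apply nonzero_indices_ones|apply Rabs_def1; lra].
    + intros y Hy. apply is_derive_dpow_neg_ln_1m. lra.
    + rewrite Rminus_0_r, ln_1, Ropp_0, dpow_S_at_0. apply mLi_cons_at_0.
Qed.

(** * Classical polylogarithms *)

Definition li_coef (k n : nat) : R := match n with O => 0 | S _ => / INR n ^ k end.

Definition Li (k : nat) (x : R) : R := PSeries (li_coef k) x.

Lemma li_coef_inside k x : Rabs x < 1 -> Rbar_lt (Rabs x) (CV_radius (li_coef k)).
Proof.
  intros Hx. apply Rbar_lt_le_trans with 1; [exact Hx|].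
  apply CV_radius_bounded. exists 1. intros [|n]; rewrite pow1, Rmult_1_r; cbn [li_coef].
  - rewrite Rabs_R0. lra.
  - assert (Hn : 1 <= INR (S n) ^ k) by (apply pow_R1_Rle, (le_INR 1); lia).
    rewrite Rabs_pos_eq by (left; apply Rinv_0_lt_compat; lra).
    rewrite <- Rinv_1. apply Rinv_le_contravar; lra.
Qed.

Lemma mLi_coef_single k n : (1 <= k)%nat -> mLi_coef (Z.of_nat k :: nil) n = li_coef k n.
Proof.
  intros Hk. destruct n as [|n]; [reflexivity|]. cbn [mLi_coef nsum].
  rewrite mzv_term_pos, Nat2Z.id by lia. apply Rmult_1_r.
Qed.

Lemma polylog_eq_Li k x : (1 <= k)%nat -> Rabs x < 1 -> polylog k x = Li k x.
Proof.
  intros Hk Hx. unfold polylog, mpolylog.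
  assert (Hs : nonzero_indices (Z.of_nat k :: map Z.of_nat nil)) by (repeat constructor; lia).
  rewrite (is_lim_seq_unique _ _ (is_lim_seq_li_partial k nil x Hk Hs Hx)).
  apply PSeries_ext. intros n. now apply mLi_coef_single.
Qed.

Lemma zeta_eq_Series k : (1 <= k)%nat -> zeta k = Series (li_coef k).
Proof.
  intros Hk. unfold zeta, mzv, Series. f_equal. apply Lim_seq_ext. intros N.
  rewrite nsum_eq_sum_n. apply sum_n_ext. intros n. now apply mLi_coef_single.
Qed.

Lemma ex_series_li_coef k : (2 <= k)%nat -> ex_series (li_coef k).
Proof.
  intros Hk. apply ex_series_incr_1.
  apply (ex_series_le (K := R_AbsRing) (V := R_CompleteNormedModule))
    with (2 := ex_series_inv_pow_3_2).
  intros n. cbn [li_coef]. set (N := INR (S n)).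
  assert (HN : 1 <= N) by (apply (le_INR 1); lia).
  unfold norm; simpl; unfold abs; simpl.
  assert (Hsq : 1 <= sqrt N) by (rewrite <- sqrt_1 at 1; apply sqrt_le_1_alt; lra).
  assert (HsqN : sqrt N <= N).
  { rewrite <- (sqrt_sqrt N) at 2 by lra. rewrite <- (Rmult_1_l (sqrt N)) at 1.
    apply Rmult_le_compat_r; lra. }
  rewrite Rabs_pos_eq by (left; apply Rinv_0_lt_compat, pow_lt; lra).
  apply Rinv_le_contravar; [nra|].
  replace k with (2 + (k - 2))%nat by lia. rewrite pow_add.
  rewrite <- (Rmult_1_r (N * sqrt N)). simpl pow.
  apply Rmult_le_compat; [nra|lra|nra|now apply pow_R1_Rle].
Qed.

Lemma Li_at_left_1 k : (2 <= k)%nat -> filterlim (Li k) (at_left 1) (locally (zeta k)).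
Proof.
  intros Hk. rewrite zeta_eq_Series by lia.
  now apply Abel_at_left_1, ex_series_li_coef.
Qed.

Lemma is_derive_Li k x : x <> 0 -> Rabs x < 1 -> is_derive (Li (S k)) x (Li k x / x).
Proof.
  intros Hx0 Hx. apply is_derive_PSeries_div_x; [now apply li_coef_inside|exact Hx0|easy|].
  intros n. cbn [li_coef]. rewrite <- tech_pow_Rmult. field.
  split; [apply pow_nonzero|]; apply not_0_INR; lia.
Qed.

Lemma Li_0 x : Rabs x < 1 -> Li 0 x = x / (1 - x).
Proof.
  intros Hx. unfold Li. rewrite PSeries_decr_1_aux by reflexivity.
  rewrite (PSeries_ext _ (fun n => 1)) by (intros n; apply Rinv_1).
  unfold PSeries. rewrite (is_series_unique (fun n => 1 * x ^ n) (/ (1 - x))).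
  - unfold Rdiv. ring.
  - eapply is_series_ext; [|now apply is_series_geom]. intros n. simpl. ring.
Qed.

Lemma Li_1 x : -1 < x < 1 -> Li 1 x = - ln (1 - x).
Proof.
  intros Hx. transitivity (mLi (repeat 1%Z 1) x).
  - apply PSeries_ext. intros n. symmetry. now apply (mLi_coef_single 1).
  - rewrite mLi_ones by exact Hx. unfold dpow. simpl. field.
Qed.

Lemma is_derive_Li_1m k x : 0 < x < 1 ->
  is_derive (fun y => Li (S k) (1 - y)) x (- (Li k (1 - x) / (1 - x))).
Proof.
  intros Hx. replace (- (Li k (1 - x) / (1 - x))) with (-1 * (Li k (1 - x) / (1 - x))) by ring.
  apply (is_derive_comp (Li (S k)) (fun y => 1 - y)).
  - apply is_derive_Li; [lra|apply Rabs_def1; lra].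
  - auto_derive; [easy|ring].
Qed.

(** * The value of Li_{2,{1}_m}(1/2) *)

Definition reflection_sum (n a : nat) (x : R) : R :=
  dpow_sum n (- ln (1 - x)) (fun l => Li (a + l) (1 - x)).

(* Term by term the derivative telescopes. *)
Lemma is_derive_reflection_sum n a x : 0 < x < 1 ->
  is_derive (reflection_sum n (S a)) x
    (- (Li a (1 - x) * dpow n (- ln (1 - x))) / (1 - x)).
Proof.
  intros Hx. revert a. induction n as [|n IH]; intros a.
  - apply (is_derive_ext (fun y => Li (S a) (1 - y))).
    { intros y. unfold reflection_sum, dpow_sum. simpl. rewrite Nat.add_0_r, dpow_0. ring. }
    rewrite dpow_0, Rmult_1_r. unfold Rdiv. rewrite <- Ropp_mult_distr_l.
    now apply is_derive_Li_1m.
  - apply (is_derive_ext (fun y => Li (S a) (1 - y) * dpow (S n) (- ln (1 - y))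
                                   + reflection_sum n (S (S a)) y)).
    { intros y. unfold reflection_sum. rewrite dpow_sum_succ_l, Nat.add_0_r. f_equal.
      apply dpow_sum_ext. intros l _. now rewrite Nat.add_succ_r. }
    replace (- (Li a (1 - x) * dpow (S n) (- ln (1 - x))) / (1 - x))
      with ((- (Li a (1 - x) / (1 - x)) * dpow (S n) (- ln (1 - x))
             + Li (S a) (1 - x) * (dpow n (- ln (1 - x)) / (1 - x)))
            + - (Li (S a) (1 - x) * dpow n (- ln (1 - x))) / (1 - x)) by (field; lra).
    apply (is_derive_plus (K := R_AbsRing) (V := R_NormedModule)); [|apply IH].
    apply (is_derive_Rmult (fun y => Li (S a) (1 - y)) (fun y => dpow (S n) (- ln (1 - y)))).
    + now apply is_derive_Li_1m.
    + apply is_derive_dpow_neg_ln_1m. lra.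
Qed.

Definition reflection_invariant (m : nat) (x : R) : R :=
  mLi (2%Z :: repeat 1%Z m) x + reflection_sum (S m) 1 x.

Lemma nonzero_indices_2_ones m : nonzero_indices (2%Z :: repeat 1%Z m).
Proof. constructor; [lia|apply nonzero_indices_ones]. Qed.

Lemma is_derive_mLi_2_ones m x : 0 < x < 1 ->
  is_derive (mLi (2%Z :: repeat 1%Z m)) x (dpow (S m) (- ln (1 - x)) / x).
Proof.
  intros Hx. rewrite <- mLi_ones by lra.
  apply (is_derive_mLi_succ_head 1); [lia|lra|apply Rabs_def1; lra|].
  apply nonzero_indices_2_ones.
Qed.

Lemma reflection_invariant_const m x : 0 < x < 1 ->
  reflection_invariant m x = reflection_invariant m (1 / 2).
Proof.
  intros Hx. apply (derive_zero_const _ 0 1); [|exact Hx|lra].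
  intros y Hy. unfold reflection_invariant.
  replace 0 with (dpow (S m) (- ln (1 - y)) / y
                  + - (Li 0 (1 - y) * dpow (S m) (- ln (1 - y))) / (1 - y)).
  - apply (is_derive_plus (K := R_AbsRing) (V := R_NormedModule)).
    + now apply is_derive_mLi_2_ones.
    + now apply is_derive_reflection_sum.
  - rewrite Li_0 by (apply Rabs_def1; lra). field. lra.
Qed.

Lemma filterlim_1m_at_right_0 : filterlim (fun x => 1 - x) (at_right 0) (at_left 1).
Proof.
  intros P [eps HP]. exists eps. intros y Hy Hpos. apply HP; [|lra].
  apply ball_R_iff in Hy. apply ball_R_iff. simpl in *. lra.
Qed.

Lemma reflection_invariant_at_right_0 m :
  filterlim (reflection_invariant m) (at_right 0) (locally (zeta (S (S m)))).
Proof.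
  assert (HLi1 : filterlim (Li 1) (at_right 0) (locally 0)).
  { replace 0 with (Li 1 0) at 2 by apply PSeries_0.
    apply filterlim_at_right_of_continuous, PSeries_continuity, li_coef_inside.
    rewrite Rabs_R0. lra. }
  apply (filterlim_ext_loc (fun x => mLi (2%Z :: repeat 1%Z m) x
           + (dpow m (Li 1 x) * (- / INR (S m)) * (Li 1 x * ln x)
              + dpow_sum m (Li 1 x) (fun l => Li (2 + l) (1 - x))))).
  (* Split off the l = 0 term L(x)^(m+1) (- ln x) / (m+1)!, which tends to 0. *)
  { eapply filter_imp; [|apply at_right_0_interval]. intros x Hx.
    unfold reflection_invariant, reflection_sum.
    rewrite dpow_sum_succ_l. change (1 + 0)%nat with 1%nat.
    rewrite !Li_1 by lra. replace (1 - (1 - x)) with x by ring.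
    rewrite dpow_S. f_equal. f_equal. field. apply not_0_INR. lia. }
  replace (zeta (S (S m))) with (0 + (dpow m 0 * (- / INR (S m)) * 0
                                       + dpow_sum m 0 (fun l => zeta (2 + l))))
    by (rewrite dpow_sum_at_0; simpl; ring).
  apply filterlim_Rplus; [|apply filterlim_Rplus; [apply filterlim_Rmult|]].
  - rewrite <- (mLi_cons_at_0 2%Z (repeat 1%Z m)) at 2.
    apply filterlim_at_right_of_continuous, PSeries_continuity, mLi_coef_inside;
      [apply nonzero_indices_2_ones|rewrite Rabs_R0; lra].
  - apply filterlim_Rmult; [now apply filterlim_dpow|apply filterlim_const].
  - apply PSeries_mul_ln_at_right_0; [reflexivity|].
    pose proof (li_coef_inside 1 0) as H. rewrite Rabs_R0 in H. apply H. lra.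
  - apply filterlim_dpow_sum; [exact HLi1|]. intros l _.
    apply (filterlim_comp _ _ _ (fun x => 1 - x) (Li (2 + l)) _ (at_left 1)).
    + exact filterlim_1m_at_right_0.
    + apply Li_at_left_1. lia.
Qed.

Lemma reflection_invariant_half m : reflection_invariant m (1 / 2) = zeta (S (S m)).
Proof.
  apply (filterlim_locally_unique (F := at_right 0) (reflection_invariant m));
    [|apply reflection_invariant_at_right_0].
  apply (filterlim_ext_loc (fun _ => reflection_invariant m (1 / 2))); [|apply filterlim_const].
  eapply filter_imp; [|apply at_right_0_interval]. intros x Hx.
  symmetry. now apply reflection_invariant_const.
Qed.

Definition half_poly (k : nat) (u : R) : R := dpow_sum k (ln (2 * u)) (fun l => Li (S l) (1 / 2)).

Lemma mLi_2_ones_half m :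
  mLi (2%Z :: repeat 1%Z m) (1 / 2) = zeta (S (S m)) - half_poly (S m) 1.
Proof.
  rewrite <- reflection_invariant_half. unfold reflection_invariant, reflection_sum, half_poly.
  replace (1 - 1 / 2) with (/ 2) by field. rewrite Rmult_1_r, ln_Rinv, Ropp_involutive by lra.
  replace (/ 2) with (1 / 2) by field.
  change (fun l => Li (1 + l) (1 / 2)) with (fun l => Li (S l) (1 / 2)). ring.
Qed.

(** * The value of zeta(bar1, {1}_m, bar1) *)

Lemma Rabs_sum_n_alt_le N : Rabs (sum_n (fun n => (-1) ^ n) N) <= 1.
Proof.
  assert (Hsum : forall K, @eq R (sum_n (fun n => (-1) ^ n) K) ((1 + (-1) ^ K) / 2)).
  { induction K as [|K IH]; [rewrite sum_O; simpl; field|].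
    rewrite sum_Sn, IH. unfold plus; simpl. field. }
  assert (H1 : -1 <= (-1) ^ N <= 1) by (apply Rabs_le_between; rewrite pow_1_abs; lra).
  rewrite Hsum. apply Rabs_le. lra.
Qed.

Lemma mLi_coef_one_head_S s n : mLi_coef (1%Z :: s) (S n) = nsum s n / INR (S n).
Proof. cbn [mLi_coef]. rewrite mzv_term_1. unfold Rdiv. apply Rmult_comm. Qed.

Lemma Rabs_mLi_coef_one_head_diff_le s n : nonzero_indices s ->
  Rabs (mLi_coef (1%Z :: s) (S (S n)) - mLi_coef (1%Z :: s) (S n))
  <= 2 ^ S (length s) / (INR (S n) * sqrt (INR (S n))).
Proof.
  intros Hs. rewrite !mLi_coef_one_head_S, nsum_eq_sum_n, sum_Sn, <- nsum_eq_sum_n.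
  pose proof (Rabs_nsum_le s n Hs) as HA. pose proof (Rabs_mLi_coef_S_le s n Hs) as HD.
  rewrite S_INR with (n := S n).
  set (A := nsum s n) in *. set (D := mLi_coef s (S n)) in *. set (K := 2 ^ length s) in *.
  set (N := INR (S n)) in *. assert (HN : 1 <= N) by (apply (le_INR 1); lia).
  assert (Hq2 : sqrt N * sqrt N = N) by (apply sqrt_sqrt; lra).
  assert (Hq : 0 < sqrt N) by (apply sqrt_lt_R0; lra).
  set (q := sqrt N) in *. rewrite <- Hq2 in *.
  replace (plus A D / (q * q + 1) - A / (q * q))
    with (D * / (q * q + 1) + (- A) * / (q * q * (q * q + 1))) by (unfold plus; simpl; field; nra).
  eapply Rle_trans; [apply Rabs_triang|].
  rewrite !Rabs_mult, Rabs_Ropp, !Rabs_inv.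
  rewrite (Rabs_pos_eq (q * q + 1)), (Rabs_pos_eq (q * q * (q * q + 1))) by nra.
  apply Rle_trans with (K / q * / (q * q + 1) + K * q * / (q * q * (q * q + 1))).
  - apply Rplus_le_compat; apply Rmult_le_compat_r; try (left; apply Rinv_0_lt_compat; nra); easy.
  - simpl pow. apply Rle_trans with (2 * K / (q * (q * q + 1))); [right; field; nra|].
    assert (0 < K) by (apply pow_lt; lra).
    unfold Rdiv. fold K. apply Rmult_le_compat_l; [lra|]. apply Rinv_le_contravar; nra.
Qed.

Lemma ex_series_mLi_coef_bar1_head s : nonzero_indices s ->
  ex_series (mLi_coef ((-1)%Z :: s)).
Proof.
  intros Hs. set (c := mLi_coef (1%Z :: s)).
  assert (Hs1 : nonzero_indices (1%Z :: s)) by (constructor; [lia|exact Hs]).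
  apply (ex_series_ext (fun n => (-1) ^ n * c n)).
  { intros n. symmetry. apply (mLi_coef_opp_head 1). lia. }
  apply (ex_series_Dirichlet _ _ 1); [apply Rabs_sum_n_alt_le| |].
  - apply is_lim_seq_incr_1, is_lim_seq_abs_0.
    apply is_lim_seq_le_le with (fun _ => 0) (fun n => 2 ^ length (1%Z :: s) * / sqrt (INR (S n))).
    + intros n. split; [apply Rabs_pos|]. now apply Rabs_mLi_coef_S_le.
    + apply is_lim_seq_const.
    + replace (Finite 0) with (Rbar_mult (2 ^ length (1%Z :: s)) 0) by (simpl; f_equal; ring).
      apply is_lim_seq_scal_l, is_lim_seq_inv_sqrt_S.
  - apply ex_series_incr_1.
    apply (ex_series_le (K := R_AbsRing) (V := R_CompleteNormedModule))
      with (fun n => 2 ^ S (length s) * / (INR (S n) * sqrt (INR (S n)))).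
    + intros n. unfold norm; simpl; unfold abs; simpl. rewrite Rabs_Rabsolu.
      now apply Rabs_mLi_coef_one_head_diff_le.
    + apply (ex_series_scal_l (K := R_AbsRing) (V := R_NormedModule)), ex_series_inv_pow_3_2.
Qed.

Definition ones_bar1 (k : nat) : list Z := repeat 1%Z k ++ (-1)%Z :: nil.

Lemma nonzero_indices_ones_bar1 k : nonzero_indices (ones_bar1 k).
Proof.
  apply Forall_app. split; [apply nonzero_indices_ones|]. constructor; [lia|constructor].
Qed.

Lemma half_poly_half k : half_poly k (1 / 2) = Li (S k) (1 / 2).
Proof.
  unfold half_poly. replace (2 * (1 / 2)) with 1 by field.
  now rewrite ln_1, dpow_sum_at_0.
Qed.

Lemma is_derive_half_poly k u : 0 < u -> is_derive (half_poly (S k)) u (half_poly k u / u).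
Proof.
  intros Hu. replace (half_poly k u / u) with (/ u * half_poly k u) by (field; lra).
  apply (is_derive_comp (fun y => dpow_sum (S k) y (fun l => Li (S l) (1 / 2)))
           (fun u => ln (2 * u))); [apply is_derive_dpow_sum|].
  auto_derive; [lra|field; lra].
Qed.

(* Both sides vanish at u = 1/2 and satisfy f_(k+1)' = - f_k / u. *)
Lemma mLi_ones_bar1 k u : 0 < u < 1 ->
  mLi (ones_bar1 k) (1 - 2 * u) = (-1) ^ k * (Li (S k) u - half_poly k u).
Proof.
  revert u. induction k as [|k IH]; intros u Hu.
  - change (ones_bar1 0) with ((- 1)%Z :: nil).
    rewrite (mLi_opp_head 1 nil) by lia. change (1%Z :: nil) with (repeat 1%Z 1).
    rewrite mLi_ones by lra. unfold half_poly, dpow_sum. simpl sum_f_R0. rewrite !Li_1 by lra.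
    replace (1 - - (1 - 2 * u)) with (2 * (1 - u)) by ring.
    replace (1 - 1 / 2) with (/ 2) by field.
    rewrite ln_mult, ln_Rinv by lra. unfold dpow. simpl. field.
  - apply (same_derive_eq (fun u => mLi (ones_bar1 (S k)) (1 - 2 * u))
             (fun u => (-1) ^ S k * (Li (S (S k)) u - half_poly (S k) u))
             (fun u => - ((-1) ^ k * (Li (S k) u - half_poly k u)) / u) 0 1 (1 / 2));
      [| |lra| |exact Hu].
    + intros v Hv.
      replace (- ((-1) ^ k * (Li (S k) v - half_poly k v)) / v)
        with (-2 * (mLi (ones_bar1 k) (1 - 2 * v) / (1 - (1 - 2 * v))))
        by (rewrite IH by exact Hv; field; lra).
      apply (is_derive_comp (mLi (ones_bar1 (S k))) (fun u => 1 - 2 * u)).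
      * apply is_derive_mLi_one_head; [apply nonzero_indices_ones_bar1|apply Rabs_def1; lra].
      * auto_derive; [easy|ring].
    + intros v Hv.
      replace (- ((-1) ^ k * (Li (S k) v - half_poly k v)) / v)
        with ((-1) ^ S k * (Li (S k) v / v - half_poly k v / v)) by (simpl; field; lra).
      apply is_derive_scal, (is_derive_minus (Li (S (S k))) (half_poly (S k))).
      * apply is_derive_Li; [lra|apply Rabs_def1; lra].
      * apply is_derive_half_poly. lra.
    + rewrite half_poly_half. replace (1 - 2 * (1 / 2)) with 0 by field.
      change (ones_bar1 (S k)) with (1%Z :: ones_bar1 k). rewrite mLi_cons_at_0. ring.
Qed.

Lemma filterlim_midpoint_1_at_left_1 : filterlim (fun y => (1 + y) / 2) (at_left 1) (at_left 1).
Proof.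
  intros P [eps HP]. exists eps. intros y Hy Hlt. apply HP; [|lra].
  apply ball_R_iff in Hy. apply ball_R_iff. simpl in *. lra.
Qed.

Lemma Series_mLi_coef_bar1_ones_bar1 m :
  Series (mLi_coef ((-1)%Z :: ones_bar1 m))
  = (-1) ^ S m * (zeta (S (S m)) - half_poly (S m) 1).
Proof.
  apply (filterlim_locally_unique (F := at_left 1) (PSeries (mLi_coef ((-1)%Z :: ones_bar1 m)))).
  { apply Abel_at_left_1, ex_series_mLi_coef_bar1_head, nonzero_indices_ones_bar1. }
  apply (filterlim_ext_loc
           (fun y => (-1) ^ S m * (Li (S (S m)) ((1 + y) / 2) - half_poly (S m) ((1 + y) / 2)))).
  { eapply filter_imp; [|apply at_left_1_interval]. intros y Hy.
    rewrite <- mLi_ones_bar1 by lra. replace (1 - 2 * ((1 + y) / 2)) with (- y) by field.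
    symmetry. apply (mLi_opp_head 1). lia. }
  apply (filterlim_comp _ _ _ (fun y => (1 + y) / 2)
           (fun u => (-1) ^ S m * (Li (S (S m)) u - half_poly (S m) u)) _ (at_left 1));
    [exact filterlim_midpoint_1_at_left_1|].
  apply filterlim_Rmult; [apply filterlim_const|apply filterlim_Rminus].
  - apply Li_at_left_1. lia.
  - apply filterlim_at_left_of_continuous, continuity_pt_filterlim.
    apply (ex_derive_continuous (K := R_AbsRing) (V := R_NormedModule)).
    eexists. apply is_derive_half_poly. lra.
Qed.

Theorem corollary3p4 (m : nat) :
  let C := zeta (m + 2) -
           sum_f_R0 (fun l => (ln 2) ^ (m + 1 - l) / INR (fact (m + 1 - l))
                              * polylog (l + 1) (1 / 2)) (m + 1) in
  is_lim_seq (li_partial (2%nat :: repeat 1%nat m) (1 / 2)) C /\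
  is_lim_seq (nsum ((-1)%Z :: repeat 1%Z m ++ (-1)%Z :: nil)) ((-1) ^ (m + 1) * C).
Proof.
  intros C.
  assert (HC : C = zeta (S (S m)) - half_poly (S m) 1).
  { unfold C, half_poly, dpow_sum, dpow.
    rewrite Rmult_1_r, Nat.add_1_r, Nat.add_succ_r, Nat.add_1_r. f_equal. apply sum_eq. intros l Hl.
    rewrite polylog_eq_Li, Nat.add_1_r by (lia || (rewrite Rabs_pos_eq; lra)). ring. }
  split.
  - rewrite HC, <- mLi_2_ones_half.
    replace (repeat 1%Z m) with (map Z.of_nat (repeat 1%nat m)) by apply map_repeat.
    apply (is_lim_seq_li_partial 2); [lia| |rewrite Rabs_pos_eq; lra].
    rewrite map_repeat. apply nonzero_indices_2_ones.
  - rewrite HC, Nat.add_1_r, <- Series_mLi_coef_bar1_ones_bar1.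
    apply (is_lim_seq_ext (sum_n (mLi_coef ((-1)%Z :: ones_bar1 m)))).
    { intros N. symmetry. apply nsum_eq_sum_n. }
    apply Series_correct, ex_series_mLi_coef_bar1_head, nonzero_indices_ones_bar1.
Qed.
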